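(* Let $I$ be a real interval with $[0,1]\subseteq I\subseteq\mathbb{R}_+$, and let $f\colon I^n\to\mathbb{R}$ be a nonconstant quasi-Lovász extension, $f=L\circ\varphi$. Then the following are equivalent: (i) $f_0$ is weakly homogeneous; (ii) there exists $A\subseteq[n]$ with $f_0(\mathbf{1}_A)\neq0$; (iii) $\varphi(1)\neq 0$. Moreover, in this case $f_0(x\mathbf{1}_A)=\frac{\varphi(x)}{\varphi(1)}f_0(\mathbf{1}_A)$ for all $x\in I$ and all $A\subseteq[n]$.
   Context: Notation: $[n]=\{1,\ldots,n\}$; $\mathbf{1}_A$ is the indicator tuple of $A\subseteq[n]$, $\mathbf{0}=\mathbf{1}_\varnothing$; for a function $g$, $g_0=g-g(\mathbf{0})$. For $\sigma$ a permutation of $[n]$, $\mathbb{R}^n_\sigma=\{\mathbf{x}: x_{\sigma(1)}\leq\cdots\leq x_{\sigma(n)}\}$, $A^\uparrow_\sigma(i)=\{\sigma(i),\ldots,\sigma(n)\}$, $A^\uparrow_\sigma(n+1)=\varnothing$. The Lovász extension $L_\psi\colon\mathbb{R}^n\to\mathbb{R}$ of $\psi\colon\{0,1\}^n\to\mathbb{R}$ is the function whose restriction to each $\mathbb{R}^n_\sigma$ is the unique affine function agreeing with $\psi$ at the points $\mathbf{1}_{A^\uparrow_\sigma(k)}$, $k\in[n+1]$; a Lovász extension is any such $L_\psi$. A quasi-Lovász extension is a function $f\colon I^n\to\mathbb{R}$ with $f(\mathbf{x})=L(\varphi(x_1),\ldots,\varphi(x_n))$, where $L$ is a Lovász extension and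 $\varphi\colon I\to\mathbb{R}$ is nondecreasing with $\varphi(0)=0$. A function $g\colon I^n\to\mathbb{R}$ with $I\subseteq\mathbb{R}_+$ is weakly homogeneous if there exists a nondecreasing $\phi\colon I\to\mathbb{R}$ with $\phi(0)=0$ such that $g(x\mathbf{1}_A)=\phi(x)g(\mathbf{1}_A)$ for all $x\in I$, $A\subseteq[n]$. *)

From HB Require Import structures.
From mathcomp Require Import all_boot all_order all_algebra all_fingroup.
Set Implicit Arguments. Unset Strict Implicit. Unset Printing Implicit Defensive.
Import Order.TTheory GRing.Theory Num.Theory.
Local Open Scope ring_scope.

Section Defs.
Variable R : realFieldType.
Variable n : nat.

Definition indic (A : {set 'I_n}) : 'I_n -> R := fun i => (i \in A)%:R.

(* A^up_sigma(k+1) = {sigma(k+1),...,sigma(n)} with 0-based k : 'I_n.+1 ;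
   k = n gives the empty set *)
Definition Aup (s : 'S_n) (k : 'I_n.+1) : {set 'I_n} :=
  [set s j | j : 'I_n & (k <= j)%N].

Definition in_cone (s : 'S_n) (x : 'I_n -> R) : Prop :=
  forall j1 j2 : 'I_n, (j1 <= j2)%N -> x (s j1) <= x (s j2).

(* L is the Lovász extension of psi : {0,1}^n -> R (identified with subsets):
   on each cone, L coincides with an affine function agreeing with psi at the
   points 1_{A^up_sigma(k)}. *)
Definition lovasz_ext_of (psi : {set 'I_n} -> R) (L : ('I_n -> R) -> R) : Prop :=
  forall s : 'S_n, exists (c : R) (a : 'I_n -> R),
    (forall x, in_cone s x -> L x = c + \sum_i a i * x i) /\
    (forall k : 'I_n.+1,
        c + \sum_i a i * indic (Aup s k) i = psi (Aup s k)).

Definition is_lovasz_ext (L : ('I_n -> R) -> R) : Prop :=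
  exists psi, lovasz_ext_of psi L.

Definition is_interval (I : R -> Prop) : Prop :=
  forall x y z, I x -> I z -> x <= y -> y <= z -> I y.

Definition nondecr_on (I : R -> Prop) (phi : R -> R) : Prop :=
  forall x y, I x -> I y -> x <= y -> phi x <= phi y.

Definition in_dom (I : R -> Prop) (x : 'I_n -> R) : Prop := forall i, I (x i).

Definition quasi_lovasz (I : R -> Prop) (f : ('I_n -> R) -> R)
  (L : ('I_n -> R) -> R) (phi : R -> R) : Prop :=
  [/\ is_lovasz_ext L, nondecr_on I phi, phi 0 = 0 &
      forall x, in_dom I x -> f x = L (fun i => phi (x i))].

Definition zero_vec : 'I_n -> R := fun _ => 0.

Definition fzero (g : ('I_n -> R) -> R) : ('I_n -> R) -> R :=
  fun x => g x - g zero_vec.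

Definition weakly_homogeneous (I : R -> Prop) (g : ('I_n -> R) -> R) : Prop :=
  exists phi : R -> R, [/\ nondecr_on I phi, phi 0 = 0 &
    forall x (A : {set 'I_n}), I x ->
      g (fun i => x * indic A i) = phi x * g (indic A)].

Definition nonconstant_on (I : R -> Prop) (f : ('I_n -> R) -> R) : Prop :=
  exists x y, [/\ in_dom I x, in_dom I y & f x <> f y].

End Defs.

From HB Require Import structures.
From mathcomp Require Import all_boot all_order all_algebra all_fingroup.
From Stdlib Require Import FunctionalExtensionality.
Import Order.TTheory GRing.Theory Num.Theory.
Local Open Scope ring_scope.

(* On each cone a Lovász extension L is affine with constant term L(0), and an
   indicator 1_A lies in a common cone with all its nonnegative multiples, so
   L_0(t 1_A) = t L_0(1_A) for t >= 0; composing with phi gives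
   f_0(x 1_A) = phi(x) L_0(1_A).  Since 1_{A_s(k)} - 1_{A_s(k+1)} is the unit
   vector at s(k), an L_0 vanishing on all indicators has zero linear part on
   every cone, i.e. L is constant, and then so is f.  Hence L_0(1_A) <> 0 for
   some A, and all three conditions reduce to phi(1) <> 0. *)

Lemma exists_cone {R : realFieldType} {n : nat} (z : 'I_n -> R) :
  exists s : 'S_n, in_cone s z.
Proof.
pose leT i j := z i <= z j.
have leT_total : total leT by move=> i j; exact: le_total.
have : perm_eq (sort leT (enum 'I_n)) (ord_tuple n).
  by rewrite perm_sort val_ord_tuple.
case/tuple_permP=> s Es; exists s => j1 j2 le_j12.
have sorted_z := sort_sorted leT_total (enum 'I_n).
have nth_s (j : 'I_n) : nth j1 (sort leT (enum 'I_n)) j = s j.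
  by rewrite Es -tnth_nth tnth_mktuple tnth_ord_tuple.
have size_s : size (sort leT (enum 'I_n)) = n by rewrite size_sort size_enum_ord.
have := sorted_leq_nth (fun a b c => @le_trans _ R (z a) (z b) (z c))
  (fun a => lexx (z a)) j1 sorted_z.
by move=> /(_ j1 j2); rewrite !inE size_s !ltn_ord !nth_s; apply.
Qed.

Lemma mem_Aup (n : nat) (s : 'S_n) (k : 'I_n.+1) (j : 'I_n) :
  (s j \in Aup s k) = (k <= j)%N.
Proof.
apply/imsetP/idP => [[j' + /perm_inj ->]|le_kj]; first by rewrite inE.
by exists j; rewrite ?inE.
Qed.

Section Indicators.
Context {R : realFieldType} {n : nat}.

Lemma indic_Aup_in_cone (s : 'S_n) (k : 'I_n.+1) : in_cone s (indic R (Aup s k)).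
Proof.
move=> j1 j2 le_j12; rewrite /indic !mem_Aup ler_nat.
by case: (leqP k j1) => // le_kj1; rewrite (leq_trans le_kj1 le_j12).
Qed.

Lemma indic_AupD (s : 'S_n) (j : 'I_n) (i : 'I_n) :
  indic R (Aup s (inord j)) i - indic R (Aup s (inord j.+1)) i = (i == s j)%:R.
Proof.
have lt_j : (j < n.+1)%N by rewrite ltnS ltnW.
have lt_jS : (j.+1 < n.+1)%N by rewrite ltnS.
rewrite -[i](permKV s) /indic !mem_Aup !inordK // (inj_eq perm_inj) -val_eqE /=.
by case: ltngtP; rewrite ?subrr ?subr0.
Qed.

Lemma in_cone_scale (s : 'S_n) (t : R) (x : 'I_n -> R) :
  0 <= t -> in_cone s x -> in_cone s (fun i => t * x i).
Proof. by move=> t_ge0 x_s j1 j2 le_j12; rewrite ler_wpM2l // x_s. Qed.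

Lemma scale_indic_comp (phi : R -> R) (x : R) (A : {set 'I_n}) :
  phi 0 = 0 -> (fun i => phi (x * indic R A i)) = (fun i => phi x * indic R A i).
Proof.
move=> phi0; apply: functional_extensionality => i.
by rewrite /indic; case: (i \in A); rewrite ?mulr1 ?mulr0.
Qed.

End Indicators.

Section LovaszExtension.
Context {R : realFieldType} {n : nat}.
Variable L : ('I_n -> R) -> R.
Hypothesis L_lovasz : is_lovasz_ext L.

Lemma lovasz_ext_on_cone (s : 'S_n) :
  exists a : 'I_n -> R, forall x, in_cone s x ->
    fzero L x = \sum_i a i * x i.
Proof.
have [psi /(_ s) [c [a [L_s _]]]] := L_lovasz.
have zero_s : in_cone s (@zero_vec R n) by [].
have L_zero : L (@zero_vec R n) = c.
  by rewrite L_s // big1 ?addr0 // => i _; rewrite mulr0.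
by exists a => x x_s; rewrite /fzero L_zero L_s // addrC addKr.
Qed.

Lemma lovasz_ext_scale_indic (A : {set 'I_n}) (t : R) : 0 <= t ->
  fzero L (fun i => t * indic R A i) = t * fzero L (indic R A).
Proof.
move=> t_ge0; have [s A_s] := exists_cone (indic R A).
have [a L_s] := lovasz_ext_on_cone s.
rewrite L_s; last exact: in_cone_scale.
by rewrite L_s // mulr_sumr; apply: eq_bigr => i _; rewrite mulrCA.
Qed.

Lemma lovasz_ext_const :
  (forall B, fzero L (indic R B) = 0) ->
  forall z, L z = L (@zero_vec R n).
Proof.
move=> L_indic z; have [s z_s] := exists_cone z.
have [a L_s] := lovasz_ext_on_cone s.
have a_Aup k : \sum_i a i * indic R (Aup s k) i = 0.
  by rewrite -L_s ?L_indic //; apply: indic_Aup_in_cone.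
have a0 i : a i = 0.
  rewrite -[i](permKV s); set j := (s^-1)%g i.
  transitivity (\sum_i0 a i0 * (i0 == s j)%:R).
    rewrite (bigD1 (s j)) //= eqxx mulr1 big1 ?addr0 // => i0 /negPf ->.
    by rewrite mulr0.
  under eq_bigr => i0 _ do rewrite -indic_AupD mulrBr.
  by rewrite sumrB !a_Aup subrr.
apply/eqP; rewrite -subr_eq0 -/(fzero L z) L_s //.
by apply/eqP/big1 => i _; rewrite a0 mul0r.
Qed.

End LovaszExtension.

Section QuasiLovaszExtension.
Context {R : realFieldType} {n : nat} {I : R -> Prop}.
Context {f L : ('I_n -> R) -> R} {phi : R -> R}.
Hypothesis I_unit : forall x : R, 0 <= x -> x <= 1 -> I x.
Hypothesis I_ge0 : forall x : R, I x -> 0 <= x.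
Hypothesis f_ql : quasi_lovasz I f L phi.

Lemma I_indic (x : R) (A : {set 'I_n}) : I x -> in_dom I (fun i => x * indic R A i).
Proof.
move=> Ix i; rewrite /indic; case: (i \in A); rewrite ?mulr1 // mulr0.
by apply: I_unit; rewrite ?lexx ?ler01.
Qed.

Lemma phi_ge0 (x : R) : I x -> 0 <= phi x.
Proof.
case: f_ql => _ phi_mono phi0 _ Ix; rewrite -phi0.
by apply: phi_mono; rewrite ?I_ge0 //; apply: I_unit; rewrite ?lexx ?ler01.
Qed.

Lemma fzero_scale_indic (x : R) (A : {set 'I_n}) : I x ->
  fzero f (fun i => x * indic R A i) = phi x * fzero L (indic R A).
Proof.
move=> Ix; case: f_ql => L_lovasz _ phi0 f_L.
have I0 : I 0 by apply: I_unit; rewrite ?lexx ?ler01.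
have f_zero : f (@zero_vec R n) = L (@zero_vec R n).
  rewrite f_L // /zero_vec; congr L.
  by apply: functional_extensionality => i; rewrite phi0.
rewrite /fzero f_zero f_L; last exact: I_indic.
rewrite scale_indic_comp //.
exact/lovasz_ext_scale_indic/phi_ge0.
Qed.

Lemma fzero_indic (A : {set 'I_n}) : fzero f (indic R A) = phi 1 * fzero L (indic R A).
Proof.
rewrite -fzero_scale_indic; last by apply: I_unit; rewrite ?ler01 ?lexx.
by congr fzero; apply: functional_extensionality => i; rewrite mul1r.
Qed.

Lemma nonconstant_exists_fzero_indic_neq0 :
  nonconstant_on I f -> exists A : {set 'I_n}, fzero L (indic R A) != 0.
Proof.
move=> [u [v [Iu Iv fuv]]]; case: f_ql => L_lovasz _ _ f_L.
case: (pickP (fun A => fzero L (indic R A) != 0)) => [A LA | L_indic].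
  by exists A.
have {}L_indic B : fzero L (indic R B) = 0 by apply/eqP/negbFE/L_indic.
by case: fuv; rewrite !f_L // !(lovasz_ext_const _ L_lovasz L_indic).
Qed.

Lemma nonconstant_phi_neq0 :
  nonconstant_on I f -> ~ (forall x, I x -> phi x = 0).
Proof.
move=> [u [v [Iu Iv fuv]]] phi_0; case: f_ql => _ _ _ f_L.
have phi_vec w : in_dom I w -> (fun i => phi (w i)) = @zero_vec R n.
  by move=> Iw; apply: functional_extensionality => i; rewrite phi_0.
by case: fuv; rewrite !f_L // !phi_vec.
Qed.

End QuasiLovaszExtension.

Theorem proposition3 (R : realFieldType) (n : nat) (I : R -> Prop)
  (f : ('I_n -> R) -> R) (L : ('I_n -> R) -> R) (phi : R -> R) :
  is_interval I ->
  (forall x : R, 0 <= x -> x <= 1 -> I x) ->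
  (forall x : R, I x -> 0 <= x) ->
  quasi_lovasz I f L phi ->
  nonconstant_on I f ->
  [/\ (weakly_homogeneous I (fzero f) <->
         exists A : {set 'I_n}, fzero f (indic R A) <> 0),
      ((exists A : {set 'I_n}, fzero f (indic R A) <> 0) <-> phi 1 <> 0) &
      (phi 1 <> 0 ->
         forall (x : R) (A : {set 'I_n}), I x ->
           fzero f (fun i => x * indic R A i) = phi x / phi 1 * fzero f (indic R A))].
Proof.
move=> _ I_unit I_ge0 f_ql f_nonconst.
have f0_indic := fzero_indic I_unit I_ge0 f_ql.
have f0_scale := fzero_scale_indic I_unit I_ge0 f_ql.
have [A0 LA0] := nonconstant_exists_fzero_indic_neq0 f_ql f_nonconst.
have ii_iii : (exists A, fzero f (indic R A) <> 0) <-> phi 1 <> 0.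
  split=> [[A] | /eqP phi1]; first by rewrite f0_indic => + phi1; rewrite phi1 mul0r.
  by exists A0; apply/eqP; rewrite f0_indic mulf_neq0.
have scale : phi 1 <> 0 -> forall x A, I x ->
    fzero f (fun i => x * indic R A i) = phi x / phi 1 * fzero f (indic R A).
  by move=> /eqP phi1 x A Ix; rewrite f0_indic f0_scale // mulrA divfK.
split=> //; split=> [[psi [_ _ f_psi]] | /ii_iii phi1].
  case: (pickP (fun A => fzero f (indic R A) != 0)) => [A /eqP | f_indic].
    by exists A.
  case: (nonconstant_phi_neq0 f_ql f_nonconst) => x Ix.
  have /eqP := f_psi x A0 Ix; rewrite f0_scale // (eqP (negbFE (f_indic A0))).
  by rewrite mulr0 mulf_eq0 (negbTE LA0) orbF => /eqP.
have [_ phi_mono phi0 _] := f_ql.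
have phi1_gt0 : 0 < phi 1.
  rewrite lt_def (phi_ge0 I_unit I_ge0 f_ql) ?andbT; first exact/eqP.
  by apply: I_unit; rewrite ?ler01 ?lexx.
exists (fun x => phi x / phi 1); split=> [x y Ix Iy le_xy | | ]; last exact: scale.
  by apply: ler_wpM2r; [rewrite invr_ge0 ltW | exact: phi_mono].
by rewrite phi0 mul0r.
Qed.
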